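(* Let $\mathcal{C}$ be a Cayley algebra over a field $\mathbb{F}$ with norm $\mathrm{n}$. Then every $2$-local automorphism of $\mathcal{C}$ is a linear map.
   Context: A Cayley (octonion) algebra over $\mathbb{F}$ is a unital nonassociative algebra $\mathcal{C}$ of dimension $8$ over $\mathbb{F}$ endowed with a quadratic form $\mathrm{n}:\mathcal{C}\to\mathbb{F}$ (the norm) such that $\mathrm{n}(xy)=\mathrm{n}(x)\mathrm{n}(y)$ for all $x,y$ and whose polar form $\mathrm{n}(x,y)=\mathrm{n}(x+y)-\mathrm{n}(x)-\mathrm{n}(y)$ is nondegenerate. A map $\Delta:\mathcal{C}\to\mathcal{C}$ (not assumed linear) is a $2$-local automorphism if for every pair $x,y\in\mathcal{C}$ there is an algebra automorphism $\varphi_{x,y}$ of $\mathcal{C}$ (depending on $x,y$) with $\Delta(x)=\varphi_{x,y}(x)$ and $\Delta(y)=\varphi_{x,y}(y)$. *)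

From HB Require Import structures.
From mathcomp Require Import all_boot all_order all_algebra.
Set Implicit Arguments. Unset Strict Implicit. Unset Printing Implicit Defensive.
Import GRing.Theory.
Local Open Scope ring_scope.

(* A (possibly nonassociative) unital algebra structure on the finite-dimensional
   F-vector space V is given by a multiplication [mul] and a unit [e]. *)

Definition bilinear_mul (F : fieldType) (V : vectType F) (mul : V -> V -> V) :=
  (forall (a : F) (x y z : V), mul (a *: x + y) z = a *: mul x z + mul y z) /\
  (forall (a : F) (x y z : V), mul z (a *: x + y) = a *: mul z x + mul z y).

Definition is_unit_elt (F : fieldType) (V : vectType F) (mul : V -> V -> V) (e : V) :=
  forall x, mul e x = x /\ mul x e = x.

Definition polar (F : fieldType) (V : vectType F) (n : V -> F) (x y : V) : F :=
  n (x + y) - n x - n y.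

Definition quadratic_form (F : fieldType) (V : vectType F) (n : V -> F) :=
  (forall (a : F) (x : V), n (a *: x) = a ^+ 2 * n x) /\
  (forall (a : F) (x y z : V), polar n (a *: x + y) z = a * polar n x z + polar n y z).

Definition nondegenerate (F : fieldType) (V : vectType F) (n : V -> F) :=
  forall x : V, (forall y : V, polar n x y = 0) -> x = 0.

Definition cayley_algebra (F : fieldType) (V : vectType F)
    (mul : V -> V -> V) (e : V) (n : V -> F) : Prop :=
  [/\ \dim (fullv : {vspace V}) = 8%N,
      bilinear_mul mul,
      is_unit_elt mul e,
      quadratic_form n
    & (forall x y, n (mul x y) = n x * n y) /\ nondegenerate n].

Definition linear_map (F : fieldType) (V : vectType F) (f : V -> V) :=
  forall (a : F) (x y : V), f (a *: x + y) = a *: f x + f y.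

Definition algebra_automorphism (F : fieldType) (V : vectType F)
    (mul : V -> V -> V) (e : V) (phi : V -> V) : Prop :=
  [/\ linear_map phi, bijective phi,
      (forall x y, phi (mul x y) = mul (phi x) (phi y)) & phi e = e].

Definition two_local_automorphism (F : fieldType) (V : vectType F)
    (mul : V -> V -> V) (e : V) (Delta : V -> V) : Prop :=
  forall x y : V, exists phi : V -> V,
    [/\ algebra_automorphism mul e phi, Delta x = phi x & Delta y = phi y].

(* In a composition algebra every x satisfies x x = t(x) x - n(x) e with
   t(x) = n(x, e).  Applying an automorphism phi to this equation and comparing
   with the equation for phi x shows that phi preserves n: if the traces differ,
   the two equations force phi x, hence x, into F e, where phi is the identity.
   So a 2-local automorphism Delta preserves the polar form, as
   n(Delta x, Delta y) = n(phi x, phi y) for phi = phi_{x,y}.  A map preserving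
   a nondegenerate bilinear form sends a basis to a free family, hence to a
   basis, and Delta (a x + y) - a Delta x - Delta y is orthogonal to every
   Delta v, hence zero. *)

From mathcomp Require Import all_boot all_order all_algebra ring.
Set Implicit Arguments. Unset Strict Implicit. Unset Printing Implicit Defensive.
Import GRing.Theory.
Local Open Scope ring_scope.

Section LinearMap.
Variables (F : fieldType) (V : vectType F) (f : V -> V).
Hypothesis f_linear : linear_map f.

Lemma linear_map0 : f 0 = 0.
Proof.
have := f_linear 1 0 0; rewrite !scale1r addr0 => f0_double.
by apply: (addrI (f 0)); rewrite addr0 -f0_double.
Qed.

Lemma linear_mapD x y : f (x + y) = f x + f y.
Proof. by rewrite -[x in LHS]scale1r f_linear scale1r. Qed.

Lemma linear_mapZ a x : f (a *: x) = a *: f x.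
Proof. by rewrite -[a *: x]addr0 f_linear linear_map0 addr0. Qed.

Lemma linear_mapB x y : f (x - y) = f x - f y.
Proof. by rewrite linear_mapD -scaleN1r linear_mapZ scaleN1r. Qed.

End LinearMap.

Section QuadraticSpace.
Variables (F : fieldType) (V : vectType F) (n : V -> F).
Hypothesis qform : quadratic_form n.

Lemma polarC x y : polar n x y = polar n y x.
Proof. by rewrite /polar [x + y]addrC addrAC. Qed.

Lemma quadratic_form0 : n 0 = 0.
Proof. by rewrite -(scale0r (0 : V)) qform.1 expr0n mul0r. Qed.

Lemma polar0l z : polar n 0 z = 0.
Proof. by rewrite /polar add0r quadratic_form0 subr0 subrr. Qed.

Lemma polarDl x y z : polar n (x + y) z = polar n x z + polar n y z.
Proof. by have := qform.2 1 x y z; rewrite scale1r mul1r. Qed.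

Lemma polarZl a x z : polar n (a *: x) z = a * polar n x z.
Proof. by have := qform.2 a x 0 z; rewrite addr0 polar0l addr0. Qed.

Lemma polarBl x y z : polar n (x - y) z = polar n x z - polar n y z.
Proof. by rewrite polarDl -scaleN1r polarZl mulN1r. Qed.

Lemma polarDr x y z : polar n z (x + y) = polar n z x + polar n z y.
Proof. by rewrite !(polarC z) polarDl. Qed.

Lemma polar_suml (I : Type) (r : seq I) (P : pred I) (c : I -> F) (x : I -> V) z :
  polar n (\sum_(i <- r | P i) c i *: x i) z = \sum_(i <- r | P i) c i * polar n (x i) z.
Proof.
apply: (big_ind2 (fun u s => polar n u z = s)); first exact: polar0l.
  by move=> u1 s1 u2 s2 <- <-; rewrite polarDl.
by move=> i _; rewrite polarZl.
Qed.

Hypothesis nondeg : nondegenerate n.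
Variable Delta : V -> V.
Hypothesis Delta_isometry : forall x y, polar n (Delta x) (Delta y) = polar n x y.

Lemma isometry_free m (X : m.-tuple V) : free X -> free (map_tuple Delta X).
Proof.
move=> /freeP freeX; apply/freeP => k sum_DeltaX_eq0; apply: freeX.
apply: nondeg => y.
rewrite -[RHS](polar0l (Delta y)) -[X in polar n X (Delta y)]sum_DeltaX_eq0.
rewrite !polar_suml; apply: eq_bigr => i _.
by rewrite (nth_map 0) ?size_tuple // Delta_isometry.
Qed.

Lemma isometry_span_fullv :
  <<map_tuple Delta (vbasis (fullv : {vspace V}))>>%VS = fullv.
Proof.
apply: span_basis; rewrite basisEfree isometry_free ?subvf.
  by rewrite size_tuple leqnn.
exact: basis_free (vbasisP fullv).
Qed.

Lemma orthogonal_image_eq0 w : (forall v, polar n w (Delta v) = 0) -> w = 0.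
Proof.
move=> w_orth; apply: nondeg => u.
have /coord_span -> : u \in <<map_tuple Delta (vbasis fullv)>>%VS.
  by rewrite isometry_span_fullv memvf.
rewrite polarC polar_suml big1 // => i _.
by rewrite (nth_map 0) ?size_tuple // polarC w_orth mulr0.
Qed.

Lemma isometry_linear : linear_map Delta.
Proof.
move=> a x y; apply/eqP; rewrite -subr_eq0; apply/eqP.
apply: orthogonal_image_eq0 => v.
by rewrite polarBl polarDl polarZl !Delta_isometry polarDl polarZl subrr.
Qed.

End QuadraticSpace.

Section CompositionAlgebra.
Variables (F : fieldType) (V : vectType F) (mul : V -> V -> V) (e : V) (n : V -> F).
Hypotheses (mul_bilinear : bilinear_mul mul) (e_unit : is_unit_elt mul e).
Hypotheses (qform : quadratic_form n) (nondeg : nondegenerate n).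
Hypothesis normM : forall x y, n (mul x y) = n x * n y.

Lemma mulDl x y z : mul (x + y) z = mul x z + mul y z.
Proof. by have := mul_bilinear.1 1 x y z; rewrite !scale1r. Qed.

Lemma mulDr x y z : mul z (x + y) = mul z x + mul z y.
Proof. by have := mul_bilinear.2 1 x y z; rewrite !scale1r. Qed.

Lemma mul0l z : mul 0 z = 0.
Proof. by apply: (addrI (mul 0 z)); rewrite -mulDl !addr0. Qed.

Lemma polar_mull x y z : polar n (mul x y) (mul x z) = n x * polar n y z.
Proof. by rewrite /polar -mulDr !normM; ring. Qed.

Lemma polar_mul_linearized x w y z :
  polar n (mul x y) (mul w z) + polar n (mul w y) (mul x z) = polar n x w * polar n y z.
Proof.
transitivity (polar n (mul (x + w) y) (mul (x + w) z)
              - n x * polar n y z - n w * polar n y z).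
  by rewrite !mulDl !(polarDl qform) !(polarDr qform) !polar_mull; ring.
by rewrite polar_mull /polar; ring.
Qed.

Lemma mulxxE x : mul x x = polar n x e *: x - n x *: e.
Proof.
apply/eqP; rewrite -subr_eq0; apply/eqP; apply: nondeg => y.
have := polar_mull x y e; rewrite (e_unit x).2 => polar_mul_x.
have := polar_mul_linearized x e x y.
rewrite (e_unit x).1 (e_unit y).1 (polarC n x (mul x y)) polar_mul_x.
rewrite !(polarBl qform) !(polarZl qform) (polarC n e y) => <-; ring.
Qed.

Lemma unit_eq0_trivial : e = 0 -> forall v : V, v = 0.
Proof. by move=> e0 v; rewrite -(e_unit v).1 e0 mul0l. Qed.

Lemma automorphism_norm phi x : algebra_automorphism mul e phi -> n (phi x) = n x.
Proof.
case=> phi_linear phi_bij phiM phi_e.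
set p := phi x.
have : (polar n x e - polar n p e) *: p = (n x - n p) *: e.
  have phi_mulxx : mul p p = polar n x e *: p - n x *: e.
    by rewrite -phiM mulxxE (linear_mapB phi_linear) !(linear_mapZ phi_linear) phi_e.
  apply/eqP; rewrite -subr_eq0 (scalerBl (polar n x e)) (scalerBl (n x)).
  rewrite opprD opprK addrACA [- _ + _]addrC -(opprB (polar n p e *: p)) -mulxxE.
  by rewrite phi_mulxx subrr.
have [->|trace_neq] := eqVneq (polar n x e) (polar n p e).
  rewrite subrr scale0r => /esym/eqP; rewrite scaler_eq0 subr_eq0.
  case/orP=> [/eqP //|/eqP/unit_eq0_trivial trivial].
  by rewrite (trivial p) (trivial x).
rewrite -subr_eq0 in trace_neq; move=> scalar_eq.
set k := (polar n x e - polar n p e)^-1 * (n x - n p).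
have p_scalar : p = k *: e by rewrite -scalerA -scalar_eq scalerK.
have x_scalar : x = k *: e.
  by apply: (bij_inj phi_bij); rewrite (linear_mapZ phi_linear) phi_e.
by rewrite p_scalar -x_scalar.
Qed.

Lemma automorphism_polar phi x y :
  algebra_automorphism mul e phi -> polar n (phi x) (phi y) = polar n x y.
Proof.
move=> phi_aut; have [phi_linear _ _ _] := phi_aut.
by rewrite /polar -(linear_mapD phi_linear) !(automorphism_norm _ phi_aut).
Qed.

Lemma two_local_automorphism_polar Delta x y :
  two_local_automorphism mul e Delta -> polar n (Delta x) (Delta y) = polar n x y.
Proof. by move=> /(_ x y) [phi [phi_aut -> ->]]; exact: automorphism_polar. Qed.

End CompositionAlgebra.

Theorem lemma4p1 (F : fieldType) (V : vectType F) (mul : V -> V -> V) (e : V)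
    (n : V -> F) (Delta : V -> V) :
  cayley_algebra mul e n ->
  two_local_automorphism mul e Delta ->
  linear_map Delta.
Proof.
case=> _ mul_bilinear e_unit qform [normM nondeg] Delta_2local.
apply: (isometry_linear qform nondeg) => x y.
exact: (two_local_automorphism_polar mul_bilinear e_unit qform nondeg normM
          _ _ Delta_2local).
Qed.
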